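(* Let $S$ be a semigroup and $p$ a congruence on $S$. If $\{S_k : k\in K\}$ is a family of congruence classes of $S$ modulo $p$ and $U=\bigcup_{k\in K}S_k$, then $\mathrm{Sep}\,U$ is either empty or a union of some congruence classes of $S$ modulo $p$.
   Context: For a semigroup $S$ and a subset $A\subseteq S$, the idealizer of $A$ is $\mathrm{Id}\,A=\{x\in S:\ xA\subseteq A,\ Ax\subseteq A\}$, and the separator of $A$ is $\mathrm{Sep}\,A=\mathrm{Id}\,A\cap \mathrm{Id}(S\setminus A)$, i.e. the set of all $x\in S$ with $xA\subseteq A$, $Ax\subseteq A$, $x(S\setminus A)\subseteq S\setminus A$ and $(S\setminus A)x\subseteq S\setminus A$. *)

From Stdlib Require Import Setoid.

Definition associative {S : Type} (mul : S -> S -> S) : Prop :=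
  forall x y z, mul x (mul y z) = mul (mul x y) z.

Definition is_congruence {S : Type} (mul : S -> S -> S) (p : S -> S -> Prop) : Prop :=
  (forall a, p a a) /\ (forall a b, p a b -> p b a) /\
  (forall a b c, p a b -> p b c -> p a c) /\
  (forall a b c, p a b -> p (mul c a) (mul c b) /\ p (mul a c) (mul b c)).

Definition cclass {S : Type} (p : S -> S -> Prop) (a : S) : S -> Prop :=
  fun x => p a x.

Definition Id {S : Type} (mul : S -> S -> S) (A : S -> Prop) : S -> Prop :=
  fun x => (forall a, A a -> A (mul x a)) /\ (forall a, A a -> A (mul a x)).

Definition Sep {S : Type} (mul : S -> S -> S) (A : S -> Prop) : S -> Prop :=
  fun x => Id mul A x /\ Id mul (fun y => ~ A y) x.


(* If p x y and x separates U, then x a, y a (and a x, a y) are congruent,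
   and U and its complement are unions of classes; so y separates U too.
   Thus Sep U is saturated by p, hence the union of the classes of its
   own elements (possibly none). *)

Section Saturation.

Variables (S : Type) (mul : S -> S -> S) (p : S -> S -> Prop).
Hypothesis Hp : is_congruence mul p.

Local Set Implicit Arguments.

Definition saturated (A : S -> Prop) : Prop :=
  forall a b, p a b -> A a -> A b.

Lemma cong_sym (a b : S) : p a b -> p b a.
Proof. destruct Hp as [_ [Hs _]]; apply Hs. Qed.

Lemma saturated_union_cclass (K : Type) (c : K -> S) :
  saturated (fun x => exists k, cclass p (c k) x).
Proof.
  destruct Hp as [_ [_ [Ht _]]].
  intros a b Hab [k Hk]; exists k; exact (Ht _ _ _ Hk Hab).
Qed.

Lemma saturated_compl (A : S -> Prop) :
  saturated A -> saturated (fun y => ~ A y).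
Proof. intros HA a b Hab HnA HAb; exact (HnA (HA b a (cong_sym Hab) HAb)). Qed.

Lemma saturated_Id (A : S -> Prop) : saturated A -> saturated (Id mul A).
Proof.
  destruct Hp as [_ [_ [_ Hc]]].
  intros HA x y Hxy [Hl Hr]; split; intros a Ha.
  - exact (HA _ _ (proj2 (Hc x y a Hxy)) (Hl a Ha)).
  - exact (HA _ _ (proj1 (Hc x y a Hxy)) (Hr a Ha)).
Qed.

Lemma saturated_Sep (A : S -> Prop) : saturated A -> saturated (Sep mul A).
Proof.
  intros HA x y Hxy [HId HIdc]; split.
  - exact (saturated_Id HA Hxy HId).
  - exact (saturated_Id (saturated_compl HA) Hxy HIdc).
Qed.

Lemma saturated_union_own_cclass (A : S -> Prop) :
  saturated A -> forall x, A x <-> exists r, A r /\ cclass p r x.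
Proof.
  destruct Hp as [Hr _].
  intros HA x; split.
  - intros Hx; exists x; split; [exact Hx | apply Hr].
  - intros [r [Ar Hrx]]; exact (HA r x Hrx Ar).
Qed.

End Saturation.

Theorem theorem1 (S : Type) (mul : S -> S -> S) (Hassoc : associative mul)
  (p : S -> S -> Prop) (Hp : is_congruence mul p)
  (K : Type) (c : K -> S) :
  let U : S -> Prop := fun x => exists k : K, cclass p (c k) x in
  (forall x, ~ Sep mul U x) \/
  (exists R : S -> Prop,
     forall x, Sep mul U x <-> exists r, R r /\ cclass p r x).
Proof.
  intros U; right; exists (Sep mul U).
  apply (saturated_union_own_cclass Hp).
  exact (saturated_Sep Hp (saturated_union_cclass Hp c)).
Qed.
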